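(* Let $m,n,w,d$ be positive integers with $1\le w\le m-1$, let $l$ be a positive integer dividing $n$ and $v$ an integer with $0\le v\le l$. Then $$A(m,n,w,d)\le\left(\frac{m}{w}\right)^{\frac{nv}{l}}\left(\frac{m}{m-w}\right)^{n-\frac{nv}{l}} A\left((m-1)l,\frac{n}{l},lw-v,d\right),$$ and $$A(m,n,w,d)\le\left(\frac{m^l}{\binom{l}{v}w^v(m-w)^{l-v}}\right)^{\frac{n}{l}} A\left((m-1)l,\frac{n}{l},lw-v,d-\frac{n}{l}\min\{v,l-v\}\right).$$
   Context: $J(m,w)$ denotes the set of binary vectors of length $m$ and Hamming weight $w$. Elements of $J(m,w)^n$ are identified with $m\times n$ binary matrices all of whose columns have weight $w$, with distance the binary Hamming distance. $A(m,n,w,d)$ denotes the maximum cardinality of a nonempty subset of $J(m,w)^n$ in which any two distinct elements are at Hamming distance at least $2d$ (for $d\le 0$ this equals $\binom{m}{w}^n$). *)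

From mathcomp Require Import all_boot all_order all_algebra.
Set Implicit Arguments. Unset Strict Implicit. Unset Printing Implicit Defensive.
Import Order.TTheory GRing.Theory Num.Theory.

(* Elements of J(m,w)^n are m x n binary matrices whose columns all have
   Hamming weight w. *)
Definition col_weight_is (m n w : nat) (X : 'M[bool]_(m, n)) : bool :=
  [forall j : 'I_n, #|[set i : 'I_m | X i j]| == w].

Definition hdist (m n : nat) (X Y : 'M[bool]_(m, n)) : nat :=
  #|[set ij : 'I_m * 'I_n | X ij.1 ij.2 != Y ij.1 ij.2]|.

Definition is_code (m n w : nat) (d : int) (C : {set 'M[bool]_(m, n)}) : bool :=
  [&& C != set0,
      [forall X in C, col_weight_is w X] &
      [forall X in C, forall Y in C, (X != Y) ==> (2 * d <= (hdist X Y)%:Z)%R]].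

(* A(m,n,w,d): maximum cardinality of such a code (d : int; for d <= 0 this
   is binom(m,w)^n automatically). *)
Definition A (m n w : nat) (d : int) : nat :=
  \max_(C : {set 'M[bool]_(m, n)} | is_code w d C) #|C|.

From mathcomp Require Import all_boot all_order all_algebra zify.
Import Order.TTheory GRing.Theory Num.Theory.
Set Implicit Arguments. Unset Strict Implicit. Unset Printing Implicit Defensive.

(* Write m = M + 1 and n = k l, and view the n columns as k blocks of l
   columns.  Given a code C in J(m,w)^n and a choice r of one row
   in every column, read off the n selected entries (a pattern) and delete
   them; stacking the l shortened columns of each block yields an
   (M l) x k matrix.  On the codewords whose pattern lies in a set S of
   patterns with v ones per block and pairwise distances at most e, this map
   is injective into J(M l, l w - v)^k and loses at most e of the distance:
   since all columns have weight w, a selected entry where two codewords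
   differ forces a further difference in its column.  Each codeword has
   exactly |S| w^(kv) (m-w)^(n-kv) of the m^n choices of r with pattern in
   S, so averaging over r gives |C| |S| w^(kv) (m-w)^(n-kv) <= m^n A(...).
   The two bounds take for S a single pattern (e = 0), resp. all C(l,v)^k
   patterns (e = 2k min(v, l-v)). *)

Lemma card_set_sum (T : finType) (P : pred T) : #|[set x | P x]| = \sum_x P x.
Proof. by rewrite -sum1dep_card big_mkcond; apply: eq_bigr => x _; case: (P x). Qed.

Lemma card_preim_sum (T T' : finType) (f : T -> T') (S : {set T'}) :
  #|[set x | f x \in S]| = \sum_(s in S) #|[set x | f x == s]|.
Proof.
rewrite -sum1dep_card (partition_big f (mem S)) //=; apply: eq_bigr => s sS.
by rewrite -sum1dep_card; apply: eq_bigl => x; rewrite andb_idl // => /eqP ->.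
Qed.

Lemma big_mxvec_index (R : Type) (idx : R) (op : Monoid.com_law idx) k l
    (F : 'I_(k * l) -> R) :
  \big[op/idx]_j F j = \big[op/idx]_(b < k) \big[op/idx]_(p < l) F (mxvec_index b p).
Proof.
by rewrite pair_big (reindex _ (curry_mxvec_bij k l)); apply: eq_big => -[].
Qed.

Lemma prod_nat_if (T : finType) (B : {set T}) a c :
  \prod_x (if x \in B then a else c) = a ^ #|B| * c ^ (#|T| - #|B|).
Proof.
rewrite (bigID (mem B)) /= (eq_bigr (fun=> a)) => [|x ->//].
rewrite [X in _ * X](eq_bigr (fun=> c)); last by move=> x /negbTE ->.
rewrite -(cardsC B) addKn -!prod_nat_const; congr (_ * _).
by apply: eq_bigl => x; rewrite inE.
Qed.

Lemma card_sym_diff_le (T : finType) (A B : {set T}) : #|A| = #|B| ->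
  #|(A :\: B) :|: (B :\: A)| <= 2 * minn #|A| (#|T| - #|A|).
Proof.
move=> AB; have BA_AB : #|B :\: A| = #|A :\: B| by rewrite !cardsD setIC AB.
have AB_le : #|A :\: B| <= minn #|A| (#|T| - #|A|).
  rewrite leq_min subset_leq_card ?subsetDl //= AB -(cardsC B) addKn.
  by rewrite subset_leq_card // setDE subsetIr.
by rewrite (leq_trans (leq_card_setU _ _)) // BA_AB addnn -mul2n leq_mul2l AB_le orbT.
Qed.

Lemma hdistE (m n : nat) (X Y : 'M[bool]_(m, n)) :
  hdist X Y = \sum_j \sum_i (X i j != Y i j).
Proof.
by rewrite /hdist card_set_sum -(pair_bigA _ (fun i j => X i j != Y i j : nat)) exchange_big.
Qed.

Lemma hdist_col (m n : nat) (X Y : 'M[bool]_(m, n)) :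
  hdist X Y = \sum_j #|[set i | X i j != Y i j]|.
Proof. by rewrite hdistE; apply: eq_bigr => j _; rewrite card_set_sum. Qed.

Lemma hdist_eq0 (m n : nat) (X Y : 'M[bool]_(m, n)) : (hdist X Y == 0) = (X == Y).
Proof.
rewrite /hdist cards_eq0; apply/eqP/eqP => [XY|->].
  apply/matrixP => i j; apply/eqP/negPn/negP => Xij.
  by have := in_set0 (i, j); rewrite -XY inE Xij.
by apply/setP => ij; rewrite !inE eqxx.
Qed.

Lemma hdistxx (m n : nat) (X : 'M[bool]_(m, n)) : hdist X X = 0.
Proof. by apply/eqP; rewrite hdist_eq0. Qed.

Lemma hdist_trmx (m n : nat) (X Y : 'M[bool]_(m, n)) : hdist (trmx X) (trmx Y) = hdist X Y.
Proof.
rewrite !hdistE exchange_big; apply: eq_bigr => i _; apply: eq_bigr => j _.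
by rewrite !mxE.
Qed.

Lemma hdist_vec_mx (k l : nat) (s t : 'rV[bool]_(k * l)) :
  hdist (vec_mx s) (vec_mx t) = hdist s t.
Proof.
rewrite !hdistE big_mxvec_index exchange_big; apply: eq_bigr => b _; apply: eq_bigr => p _.
by rewrite big_ord1 !mxE.
Qed.

Lemma col_weightP (m n w : nat) (X : 'M[bool]_(m, n)) :
  reflect (forall j, #|[set i | X i j]| = w) (col_weight_is w X).
Proof. by apply: (iffP forallP) => wX j; apply/eqP. Qed.

Lemma card_col_weight (m n w : nat) :
  #|[set X : 'M[bool]_(m, n) | col_weight_is w X]| = 'C(m, w) ^ n.
Proof.
pose cols (X : 'M[bool]_(m, n)) : {ffun 'I_n -> {set 'I_m}} := [ffun j => [set i | X i j]].
have cols_bij : bijective cols.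
  exists (fun F : {ffun 'I_n -> {set 'I_m}} => (\matrix_(i, j) (i \in F j))%R) => [X|F].
    by apply/matrixP => i j; rewrite !(mxE, ffunE, inE).
  by apply/ffunP => j; apply/setP => i; rewrite !(mxE, ffunE, inE).
have -> : [set X | col_weight_is w X] =
    cols @^-1: setXn (fun _ => [set B : {set 'I_m} | #|B| == w]).
  by apply/setP => X; rewrite !inE; apply: eq_forallb => j; rewrite ffunE inE.
rewrite (on_card_preimset (onW_bij _ cols_bij)) cardsXn.
by rewrite prod_nat_const card_ord card_draws card_ord.
Qed.

Lemma hdist_col_weight_le (m n v : nat) (X Y : 'M[bool]_(m, n)) :
  col_weight_is v X -> col_weight_is v Y -> hdist X Y <= n * (2 * minn v (m - v)).
Proof.
move=> /col_weightP wX /col_weightP wY.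
rewrite hdist_col -[n in n * _]card_ord -sum_nat_const; apply: leq_sum => j _.
have -> : [set i | X i j != Y i j] =
    ([set i | X i j] :\: [set i | Y i j]) :|: ([set i | Y i j] :\: [set i | X i j]).
  by apply/setP => i; rewrite !inE; case: (X i j); case: (Y i j).
by apply: leq_trans (card_sym_diff_le _) _; rewrite ?wX ?wY ?card_ord.
Qed.

(* A pattern [s : 'rV_(k * l)] has [v] ones in each of its [k] blocks of [l]
   entries iff [(vec_mx s)^T] lies in J(l,v)^k. *)
Lemma card_block_weight (k l v : nat) :
  #|[set s : 'rV[bool]_(k * l) | col_weight_is v (trmx (vec_mx s))]| = 'C(l, v) ^ k.
Proof.
have blocks_bij : bijective (fun s : 'rV[bool]_(k * l) => trmx (vec_mx s)).
  exists (fun M : 'M[bool]_(l, k) => mxvec (trmx M)) => s.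
    by rewrite trmxK vec_mxK.
  by rewrite mxvecK trmxK.
rewrite -(card_col_weight l k v) -(on_card_preimset (onW_bij _ blocks_bij)).
by apply: eq_card => s; rewrite !inE.
Qed.

Lemma card_ones_block_weight (k l v : nat) (s : 'rV[bool]_(k * l)) :
  col_weight_is v (trmx (vec_mx s)) -> #|[set j | s ord0 j]| = k * v.
Proof.
move=> /col_weightP ws; rewrite card_set_sum big_mxvec_index.
rewrite -[k in k * v]card_ord -sum_nat_const.
by apply: eq_bigr => b _; rewrite -(ws b) card_set_sum; apply: eq_bigr => p _; rewrite !mxE.
Qed.

Section DeleteEntries.
Variables (m n : nat) (r : {ffun 'I_n -> 'I_m.+1}).
Implicit Types X Y : 'M[bool]_(m.+1, n).

Definition entries_at X : 'rV[bool]_n := \row_j X (r j) j.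
Definition delete_at X : 'M[bool]_(m, n) := \matrix_(i, j) X (lift (r j) i) j.

Lemma hdist_entries_at X Y :
  hdist (entries_at X) (entries_at Y) = \sum_j (X (r j) j != Y (r j) j).
Proof. by rewrite hdistE; apply: eq_bigr => j _; rewrite big_ord1 !mxE. Qed.

Lemma hdist_entries_delete X Y :
  hdist X Y = hdist (entries_at X) (entries_at Y) + hdist (delete_at X) (delete_at Y).
Proof.
rewrite hdist_entries_at !hdistE -big_split; apply: eq_bigr => j _.
by rewrite (bigD1_ord (r j)) //=; congr (_ + _); apply: eq_bigr => i _; rewrite !mxE.
Qed.

Lemma card_col_delete_at X j :
  #|[set i | X i j]| = X (r j) j + #|[set i | delete_at X i j]|.
Proof.
rewrite !card_set_sum (bigD1_ord (r j)) //=; congr (_ + _).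
by apply: eq_bigr => i _; rewrite mxE.
Qed.

Lemma hdist_entries_le_delete w X Y : col_weight_is w X -> col_weight_is w Y ->
  hdist (entries_at X) (entries_at Y) <= hdist (delete_at X) (delete_at Y).
Proof.
move=> /col_weightP wX /col_weightP wY; rewrite hdist_entries_at hdist_col.
apply: leq_sum => j _; case: eqP => [//|neqXY]; rewrite card_gt0.
apply/eqP => /setP eq_rest; apply: neqXY.
have same_rest : #|[set i | delete_at X i j]| = #|[set i | delete_at Y i j]|.
  by apply: eq_card => i; have := eq_rest i; rewrite !inE => /negbFE/eqP.
have := card_col_delete_at X j; have := card_col_delete_at Y j.
by rewrite wX wY same_rest => -> /addIn; case: (X _ _); case: (Y _ _).
Qed.

End DeleteEntries.

Lemma card_entries_at_eq (m n w : nat) (X : 'M[bool]_(m.+1, n)) (s : 'rV[bool]_n) :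
  col_weight_is w X ->
  #|[set r | entries_at r X == s]| =
    w ^ #|[set j | s ord0 j]| * (m.+1 - w) ^ (n - #|[set j | s ord0 j]|).
Proof.
move=> /col_weightP wX.
have -> : [set r | entries_at r X == s] = setXn (fun j => [set i | X i j == s ord0 j]).
  apply/setP => r; rewrite !inE; apply/eqP/forallP => [<- j | eq_rs].
    by rewrite !inE mxE.
  by apply/rowP => j; have := eq_rs j; rewrite !inE mxE => /eqP.
rewrite cardsXn (eq_bigr (fun j => if j \in [set j | s ord0 j] then w else m.+1 - w)).
  by rewrite prod_nat_if card_ord.
move=> j _; rewrite inE; case: (s ord0 j).
  by rewrite -(wX j); apply: eq_card => i; rewrite !inE eqb_id.
rewrite -(wX j) -[x in x - _](card_ord m.+1) -(cardsC [set i | X i j]) addKn.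
by apply: eq_card => i; rewrite !inE eqbF_neg.
Qed.

Lemma sum_card_entries_at (m n w t : nat) (C : {set 'M[bool]_(m.+1, n)})
    (S : {set 'rV[bool]_n}) :
  {in C, forall X, col_weight_is w X} ->
  {in S, forall s : 'rV[bool]_n, #|[set j | s ord0 j]| = t} ->
  \sum_(r : {ffun 'I_n -> 'I_m.+1}) #|[set X in C | entries_at r X \in S]| =
    #|C| * #|S| * (w ^ t * (m.+1 - w) ^ (n - t)).
Proof.
move=> wC tS.
have card_in_sum r :
    #|[set X in C | entries_at r X \in S]| = \sum_(X in C) (entries_at r X \in S).
  by rewrite card_set_sum [RHS]big_mkcond; apply: eq_bigr => X _; case: (X \in C).
under eq_bigr => r _ do rewrite card_in_sum.
rewrite exchange_big -mulnA -sum_nat_const; apply: eq_bigr => X XC.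
rewrite -(card_set_sum (fun r => entries_at r X \in S)) card_preim_sum -sum_nat_const.
by apply: eq_bigr => s sS; rewrite (card_entries_at_eq _ (wC X XC)) tS.
Qed.

Section GroupColumns.
Variables (a k l : nat).
Implicit Types Y Z : 'M[bool]_(a, k * l).

(* Column [b] of [group_cols Y] stacks the columns [mxvec_index b p], [p < l],
   of [Y]. *)
Definition group_cols Y : 'M[bool]_(a * l, k) :=
  \matrix_(i, b) mxvec (\matrix_(x, p) Y x (mxvec_index b p)) ord0 i.

Lemma hdist_group_cols Y Z : hdist (group_cols Y) (group_cols Z) = hdist Y Z.
Proof.
rewrite !hdistE big_mxvec_index; apply: eq_bigr => b _.
rewrite big_mxvec_index exchange_big; apply: eq_bigr => p _; apply: eq_bigr => x _.
by rewrite !mxE !mxvecE !mxE.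
Qed.

Lemma card_col_group_cols Y b :
  #|[set i | group_cols Y i b]| = \sum_p #|[set x | Y x (mxvec_index b p)]|.
Proof.
rewrite card_set_sum big_mxvec_index exchange_big; apply: eq_bigr => p _.
by rewrite card_set_sum; apply: eq_bigr => x _; rewrite !mxE mxvecE mxE.
Qed.

End GroupColumns.

Lemma col_weight_group_delete (m k l w v : nat) (r : {ffun 'I_(k * l) -> 'I_m.+1})
    (X : 'M[bool]_(m.+1, k * l)) :
  col_weight_is w X -> col_weight_is v (trmx (vec_mx (entries_at r X))) ->
  col_weight_is (l * w - v) (group_cols (delete_at r X)).
Proof.
move=> /col_weightP wX /col_weightP wE; apply/col_weightP => b.
rewrite card_col_group_cols -(wE b) card_set_sum.
set rest := \sum_p _; set ones := \sum_p _.
suff <- : rest + ones = l * w by rewrite addnK.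
rewrite -big_split -[l in l * w]card_ord -sum_nat_const; apply: eq_bigr => p _.
by rewrite -(wX (mxvec_index b p)) (card_col_delete_at r) addnC !mxE.
Qed.

Lemma is_codeP (m n w : nat) (d : int) (C : {set 'M[bool]_(m, n)}) :
  reflect [/\ C != set0, {in C, forall X, col_weight_is w X} &
              {in C &, forall X Y, X != Y -> (2 * d <= (hdist X Y)%:Z)%R}]
          (is_code w d C).
Proof.
apply: (iffP and3P) => -[C0 /forall_inP wC dC]; split=> //.
- by move=> X Y /(forall_inP dC) /forall_inP dXC /dXC /implyP.
- by apply/forall_inP => X XC; apply/forall_inP => Y YC; apply/implyP; apply: dC.
Qed.

Lemma code_card_le_A (m n w : nat) (d : int) (C : {set 'M[bool]_(m, n)}) :
  is_code w d C -> #|C| <= A m n w d.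
Proof. exact: (@leq_bigmax_cond _ (fun C => is_code w d C) (fun C => #|C|)). Qed.

Lemma A_mul_leq (m n w : nat) (d : int) (q K : nat) :
  (forall C : {set 'M[bool]_(m, n)}, is_code w d C -> #|C| * q <= K) -> A m n w d * q <= K.
Proof.
move=> qC; rewrite /A (big_morph (muln^~ q) (fun x y => maxnMl x y q) (mul0n q)).
exact/bigmax_leqP.
Qed.

Lemma card_patterns_in_le_A (m k l w v e : nat) (d d' : int)
    (C : {set 'M[bool]_(m.+1, k * l)}) (S : {set 'rV[bool]_(k * l)})
    (r : {ffun 'I_(k * l) -> 'I_m.+1}) :
  is_code w d C ->
  {in S, forall s, col_weight_is v (trmx (vec_mx s))} ->
  {in S &, forall s t, hdist s t <= e} ->
  (2 * d' + e%:Z <= 2 * d)%R ->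
  #|[set X in C | entries_at r X \in S]| <= A (m * l) k (l * w - v) d'.
Proof.
move=> /is_codeP[_ wC dC] wS eS dd'.
set Cr := [set X in C | _]; pose proj X := group_cols (delete_at r X).
have [-> | Cr0] := eqVneq Cr set0; first by rewrite cards0.
have CrP X : X \in Cr -> X \in C /\ entries_at r X \in S by rewrite inE => /andP.
have hdistCr X Y : X \in Cr -> Y \in Cr ->
    hdist X Y <= hdist (proj X) (proj Y) + minn e (hdist (proj X) (proj Y)).
  move=> /CrP[XC XS] /CrP[YC YS]; rewrite hdist_group_cols (hdist_entries_delete r) addnC.
  by rewrite leq_add2l leq_min eS //= (hdist_entries_le_delete r (wC _ XC) (wC _ YC)).
have proj_inj : {in Cr &, injective proj}.
  move=> X Y XCr YCr eqXY; apply/eqP; rewrite -hdist_eq0 -leqn0.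
  by have := hdistCr X Y XCr YCr; rewrite eqXY hdistxx minn0.
rewrite -(card_in_imset proj_inj); apply/code_card_le_A/is_codeP; split.
- by rewrite imset_eq0.
- move=> _ /imsetP[X /CrP[XC XS] ->]; rewrite col_weight_group_delete ?wC //; exact: wS.
- move=> _ _ /imsetP[X XCr ->] /imsetP[Y YCr ->] neq_proj.
  have neqXY : X != Y by apply: contraNneq neq_proj => ->.
  have := dC X Y (proj1 (CrP X XCr)) (proj1 (CrP Y YCr)) neqXY.
  have := hdistCr X Y XCr YCr; move: dd'; set D := hdist (proj X) _; lia.
Qed.

Lemma A_mul_patterns_le (m k l w v e : nat) (d d' : int) (S : {set 'rV[bool]_(k * l)}) :
  {in S, forall s, col_weight_is v (trmx (vec_mx s))} ->
  {in S &, forall s t, hdist s t <= e} ->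
  (2 * d' + e%:Z <= 2 * d)%R ->
  A m.+1 (k * l) w d * (#|S| * (w ^ (k * v) * (m.+1 - w) ^ (k * l - k * v))) <=
    m.+1 ^ (k * l) * A (m * l) k (l * w - v) d'.
Proof.
move=> wS eS dd'; apply: A_mul_leq => C codeC; have /is_codeP[_ wC _] := codeC.
rewrite mulnA -(sum_card_entries_at wC (fun s sS => card_ones_block_weight (wS s sS))).
have -> : m.+1 ^ (k * l) * A (m * l) k (l * w - v) d' =
    \sum_(r : {ffun 'I_(k * l) -> 'I_m.+1}) A (m * l) k (l * w - v) d'.
  by rewrite sum_nat_const card_ffun !card_ord.
by apply: leq_sum => r _; apply: card_patterns_in_le_A codeC wS eS dd'.
Qed.

Lemma A_mul_one_pattern_le (m k l w v : nat) (d : int) : v <= l ->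
  A m.+1 (k * l) w d * (w ^ (k * v) * (m.+1 - w) ^ (k * l - k * v)) <=
    m.+1 ^ (k * l) * A (m * l) k (l * w - v) d.
Proof.
move=> vl; set J := [set s : 'rV[bool]_(k * l) | col_weight_is v (trmx (vec_mx s))].
have /set0Pn[s0 s0J] : J != set0.
  by rewrite -card_gt0 card_block_weight expn_gt0 bin_gt0 vl.
rewrite -[X in _ * X]mul1n -(cards1 s0).
apply: (@A_mul_patterns_le m k l w v 0) => [s /set1P -> | s t /set1P -> /set1P -> | ].
- by rewrite inE in s0J.
- by rewrite hdistxx.
- by rewrite addr0.
Qed.

Lemma A_mul_all_patterns_le (m k l w v : nat) (d : int) :
  A m.+1 (k * l) w d * ('C(l, v) ^ k * (w ^ (k * v) * (m.+1 - w) ^ (k * l - k * v))) <=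
    m.+1 ^ (k * l) * A (m * l) k (l * w - v) (d - (k * minn v (l - v))%:Z)%R.
Proof.
rewrite -card_block_weight.
apply: (@A_mul_patterns_le m k l w v (k * (2 * minn v (l - v)))).
- by move=> s; rewrite inE.
- move=> s t; rewrite !inE => ws wt; rewrite -hdist_vec_mx -hdist_trmx.
  exact: hdist_col_weight_le ws wt.
- by rewrite PoszM; lia.
Qed.

Local Open Scope ring_scope.

Lemma ler_nat_mul_div {R : numFieldType} (a b q K : nat) :
  (0 < q)%N -> (a * q <= K * b)%N -> (a%:R : R) <= K%:R / q%:R * b%:R.
Proof. by move=> q0 aqKb; rewrite mulrAC ler_pdivlMr ?ltr0n // -!natrM ler_nat. Qed.

Theorem corollary1 (m n w d l v : nat) :
  (0 < m)%N -> (0 < n)%N -> (0 < d)%N ->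
  (1 <= w)%N -> (w <= m - 1)%N ->
  (0 < l)%N -> (l %| n)%N -> (v <= l)%N ->
  ((A m n w d%:Z)%:R : rat) <=
    (m%:R / w%:R) ^+ ((n %/ l) * v) *
    (m%:R / (m - w)%:R) ^+ (n - (n %/ l) * v) *
    (A ((m - 1) * l) (n %/ l) (l * w - v) d%:Z)%:R
  /\
  ((A m n w d%:Z)%:R : rat) <=
    ((m%:R ^+ l) / ('C(l, v)%:R * w%:R ^+ v * (m - w)%:R ^+ (l - v))) ^+ (n %/ l) *
    (A ((m - 1) * l) (n %/ l) (l * w - v)
       (d%:Z - (n %/ l)%:Z * (minn v (l - v))%:Z))%:R.
Proof.
move=> m0 _ _ w0 wm l0 /dvdnP[k ->] vl.
case: m m0 wm => // m _; rewrite subn1 mulnK //= => wm.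
have Mw0 : (0 < m.+1 - w)%N by rewrite subn_gt0 ltnS.
have kvl : (k * v <= k * l)%N by rewrite leq_mul2l vl orbT.
have Q0 : (0 < w ^ (k * v) * (m.+1 - w) ^ (k * l - k * v))%N.
  by rewrite muln_gt0 !expn_gt0 w0 Mw0.
split.
- have -> : (m.+1%:R / w%:R) ^+ (k * v) * (m.+1%:R / (m.+1 - w)%:R) ^+ (k * l - k * v) =
      (m.+1 ^ (k * l))%:R / (w ^ (k * v) * (m.+1 - w) ^ (k * l - k * v))%:R :> rat.
    by rewrite !expr_div_n mulf_div -exprD subnKC // natrM !natrX.
  exact: ler_nat_mul_div Q0 (A_mul_one_pattern_le _ _ _ _ vl).
have -> : (m.+1%:R ^+ l / ('C(l, v)%:R * w%:R ^+ v * (m.+1 - w)%:R ^+ (l - v))) ^+ k =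
    (m.+1 ^ (k * l))%:R /
      ('C(l, v) ^ k * (w ^ (k * v) * (m.+1 - w) ^ (k * l - k * v)))%:R :> rat.
  rewrite expr_div_n !exprMn -!exprM -mulnBr.
  by rewrite !natrM !natrX mulrA ![(_ * k)%N]mulnC; congr (_ / _).
apply: ler_nat_mul_div (A_mul_all_patterns_le _ _ _ _ _ _).
by rewrite muln_gt0 expn_gt0 bin_gt0 vl.
Qed.
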